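(* Let $(V,o)$ be a normal surface singularity of degree $d\in\{2,3\}$ (i.e. $Z^2=-d$) with $p=p_f(V,o)>0$, where $Z$ is the fundamental cycle on the minimal resolution. Assume that $Z$ is essentially irreducible and $Z=Z_{min}$. Then $$p_a(V,o)=p_a\Big(\big(\big[\tfrac{p-1}{d}\big]+1\big)Z\Big)=\frac d2\Big(\frac{2p-2}{d}-\big[\tfrac{p-1}{d}\big]\Big)\Big(\big[\tfrac{p-1}{d}\big]+1\Big)+1.$$
   Context: $[a]=\max\{n\in\mathbb Z\mid n\le a\}$. Let $\pi\colon X\to V$ be the minimal resolution and $\pi^{-1}(o)=\bigcup_{i=1}^nE_i$ the irreducible components of the exceptional set. A cycle is $D=\sum d_iE_i$, $d_i\in\mathbb Z$; $D_1\le D_2$ is coefficientwise. $K$ is the canonical divisor of $X$; $p_a(D)=1+\frac12(D^2+D\cdot K)$ for $D>0$. The fundamental cycle $Z$ is the smallest cycle $D>0$ with support $\pi^{-1}(o)$ and $D\cdot E_i\le0$ for all $i$; $p_f(V,o)=p_a(Z)$; the degree is $-Z^2$; $p_a(V,o)=\max\{p_a(D)\mid D>0\text{ a cycle}\}$. $Z_{min}$ is the unique minimal cycle $0<Z_{min}\le Z$ with $p_a(Z_{min})=p_a(Z)$. A $(-2)$-curve is a smooth rational exceptional curve $E$ with $E^2=-2$. $Z$ is essentially irreducible if there is a component $A\le Z$ which is not a $(-2)$-curve such that, with $k$ the coefficient of $A$ in $Z$, either $Z=kA$ or all components of $Z-kA$ are $(-2)$-curves. *)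

(* Combinatorial model of the exceptional set of the minimal
   resolution of a normal surface singularity: n components E_0..E_{n-1},
   intersection matrix M (M i j = E_i . E_j) and arithmetic genera g i = p_a(E_i). *)
From HB Require Import structures.
From mathcomp Require Import all_boot all_order all_algebra.
Set Implicit Arguments. Unset Strict Implicit. Unset Printing Implicit Defensive.
Import Order.TTheory GRing.Theory Num.Theory.
Local Open Scope ring_scope.

(* cycles D = sum d_i E_i *)
Definition cyc (n : nat) := {ffun 'I_n -> int}.

Definition inter n (M : 'M[int]_n) (D1 D2 : cyc n) : int :=
  \sum_(i < n) \sum_(j < n) D1 i * M i j * D2 j.

(* K . E_i by adjunction: 2 p_a(E_i) - 2 = E_i^2 + K.E_i *)
Definition KE n (M : 'M[int]_n) (g : 'I_n -> nat) (i : 'I_n) : int :=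
  2 * (g i)%:Z - 2 - M i i.

Definition Kdot n (M : 'M[int]_n) (g : 'I_n -> nat) (D : cyc n) : int :=
  \sum_(i < n) D i * KE M g i.

Definition pa n (M : 'M[int]_n) (g : 'I_n -> nat) (D : cyc n) : rat :=
  1 + ((inter M D D + Kdot M g D)%:~R) / 2.

Definition cyc_le n (D1 D2 : cyc n) : Prop := forall i, D1 i <= D2 i.
Definition cyc_pos n (D : cyc n) : Prop := cyc_le 0 D /\ D <> 0.

Definition scale_cyc n (k : int) (D : cyc n) : cyc n := [ffun i => k * D i].
Definition ecyc n (a : 'I_n) : cyc n := [ffun i => (i == a)%:Z].

Definition resolution_data n (M : 'M[int]_n) (g : 'I_n -> nat) : Prop :=
  (0 < n)%N /\
  [/\ M^T = M,
      (forall i j, i != j -> 0 <= M i j),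
      (forall D : cyc n, D <> 0 -> inter M D D < 0),
      (forall i j, connect [rel a b | (a != b) && (0 < M a b)] i j)
    & (forall i, ~ (g i = 0%N /\ M i i = -1))].                (* minimal: no (-1)-curves *)

Definition fundamental_cycle n (M : 'M[int]_n) (Z : cyc n) : Prop :=
  let good (D : cyc n) := (forall i, 0 < D i) /\ (forall i, inter M D (ecyc i) <= 0) in
  good Z /\ forall D, good D -> cyc_le Z D.

Definition minus2_curve n (M : 'M[int]_n) (g : 'I_n -> nat) (i : 'I_n) : Prop :=
  g i = 0%N /\ M i i = -2.

Definition essentially_irreducible n (M : 'M[int]_n) (g : 'I_n -> nat) (Z : cyc n) : Prop :=
  exists a : 'I_n, ~ minus2_curve M g a /\
    (Z = scale_cyc (Z a) (ecyc a) \/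
     forall j, (Z j - Z a * (ecyc a) j != 0) -> minus2_curve M g j).

Definition Z_is_Zmin n (M : 'M[int]_n) (g : 'I_n -> nat) (Z : cyc n) : Prop :=
  forall D : cyc n, cyc_pos D -> cyc_le D Z -> pa M g D = pa M g Z -> D = Z.

(* q is the arithmetic genus p_a(V,o) = max { p_a(D) | D > 0 } *)
Definition is_sing_pa n (M : 'M[int]_n) (g : 'I_n -> nat) (q : rat) : Prop :=
  (exists D : cyc n, cyc_pos D /\ pa M g D = q) /\
  (forall D : cyc n, cyc_pos D -> pa M g D <= q).

From HB Require Import structures.
From mathcomp Require Import all_boot all_order all_algebra.
From mathcomp Require Import ring lra zify.
Set Implicit Arguments. Unset Strict Implicit. Unset Printing Implicit Defensive.
Import Order.TTheory GRing.Theory Num.Theory.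
Local Open Scope ring_scope.

(* All components but one, A, are (-2)-curves.  For such a curve E, Z = Z_min
   forces Z.E = 0: Z.E <= 0, Z.E > E^2 since otherwise Z - E would be a smaller
   candidate for Z, and Z.E = -1 would give p_a(Z - E) = p_a(Z).  Hence Z.D and
   K.D only depend on the coefficient D_A.  For any cycle D the cycle
   C = Z_A D - D_A Z is orthogonal to Z, so negative definiteness gives
   Z_A^2 D^2 + D_A^2 d = C^2 <= 0.  Either Z_A divides D_A, or C <> 0 (Z is
   primitive) and Z_A = d (Z_A divides the prime d); in both cases, rounding
   D_A / Z_A (which needs d <= 3), 2 p_a(D) - 2 <= 2 p_a(mZ) - 2 for some integer
   m.  Finally 2 p_a(mZ) - 2 = m (2p - 2 + d) - d m^2, whose maximum over the
   integers is reached at m = [(p - 1) / d] + 1. *)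

Lemma sum_sym_diag_even n (a : 'I_n -> 'I_n -> int) :
  (forall i j, a i j = a j i) -> (2 %| \sum_i \sum_j a i j - \sum_i a i i)%Z.
Proof.
elim: n a => [|n IHn] a asym; first by rewrite !big_ord0 subrr.
rewrite big_ord_recr [\sum_i a i i]big_ord_recr /=.
under eq_bigr => i _ do rewrite big_ord_recr /=.
rewrite big_split /= big_ord_recr /=.
under [X in _ + X + _]eq_bigr => i _ do rewrite asym.
set S := \sum_(i < n) \sum_(j < n) _; set T := \sum_(i < n) _; set Dg := \sum_(i < n) _.
have hS := IHn (fun i j => a (widen_ord (leqnSn n) i) (widen_ord (leqnSn n) j))
  (fun i j => asym _ _).
have -> : S + T + (T + a ord_max ord_max) - (Dg + a ord_max ord_max)
  = (S - Dg) + T * 2 by ring.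
by rewrite rpredD // dvdz_mull.
Qed.

Lemma even_mul_pred (z : int) : (2 %| z * (z - 1))%Z.
Proof.
rewrite (divz_eq z 2); set q := (z %/ 2)%Z.
have [->|->] : (z %% 2 = 0 \/ z %% 2 = 1)%Z.
  by have := modz_ge0 z (isT : 2 != 0 :> int); have := ltz_pmod z (isT : 0 < 2 :> int); lia.
- by apply/dvdzP; exists (q * (q * 2 - 1)); ring.
- by apply/dvdzP; exists (q * (q * 2 + 1)); ring.
Qed.

Lemma quadratic_le_at_floor (d t f m : int) : 0 < d -> f * d <= t < (f + 1) * d ->
  m * (2 * t + d) - d * m * m <= (f + 1) * (2 * t + d) - d * (f + 1) * (f + 1).
Proof.
move=> d_gt0 /andP [tge tlt]; rewrite -subr_ge0.
have -> : (f + 1) * (2 * t + d) - d * (f + 1) * (f + 1) - (m * (2 * t + d) - d * m * m)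
    = (f + 1 - m) * (2 * t - d * f - d * m) by ring.
have [mlef|fltm] := lerP m f; first by rewrite mulr_ge0 //; nia.
have [->|m_ne] := eqVneq m (f + 1); first by rewrite subrr mul0r.
by rewrite mulr_le0 //; nia.
Qed.

Lemma nondivisible_square_bound (d A X kap : int) : d = 2 \/ d = 3 ->
  ~~ (d %| A)%Z -> d * d * X + A * A * d <= -1 ->
  exists m, X + A * kap <= - (d * m * m) + m * (d * kap).
Proof.
(* One of m = A %/ d and m = A %/ d + 1 works; this is where d <= 3 is needed. *)
move=> d23 dnA; have d_gt0 : 0 < d by case: d23 => ->.
rewrite {1 2 3}(divz_eq A d); set q := (A %/ d)%Z; set r := (A %% d)%Z => hX.
have r_ltd : r < d := ltz_pmod A d_gt0.
have r_gt0 : 0 < r.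
  rewrite lt_def modz_ge0 ?andbT; last exact: lt0r_neq0.
  by apply: contra dnA => /eqP/dvdz_mod0P.
have [kle|kgt] := lerP kap (2 * q); [exists q | exists (q + 1)]; case: d23 => d_eq;
  rewrite d_eq in r_ltd hX *; nia.
Qed.

Lemma floor_div_bounds (t d f : int) : 0 < d ->
  f = Num.floor (t%:~R / d%:~R : rat) -> f * d <= t < (f + 1) * d.
Proof.
move=> d_gt0 ->; have d_gt0' : 0 < d%:~R :> rat by rewrite ltr0z.
have /andP [fle tlt] := floor_itv (t%:~R / d%:~R : rat).
rewrite -(ler_int rat) -(ltr_int rat) !rmorphM /=.
by rewrite -ler_pdivlMr // -ltr_pdivrMr // fle tlt.
Qed.

Section IntersectionForm.
Variables (n : nat) (M : 'M[int]_n) (g : 'I_n -> nat).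

Lemma interDl D1 D2 E : inter M (D1 + D2) E = inter M D1 E + inter M D2 E.
Proof.
rewrite /inter -big_split /=; apply: eq_bigr => i _.
by rewrite -big_split /=; apply: eq_bigr => j _; rewrite ffunE; ring.
Qed.

Lemma interDr D E1 E2 : inter M D (E1 + E2) = inter M D E1 + inter M D E2.
Proof.
rewrite /inter -big_split /=; apply: eq_bigr => i _.
by rewrite -big_split /=; apply: eq_bigr => j _; rewrite ffunE; ring.
Qed.

Lemma interZl k D E : inter M (scale_cyc k D) E = k * inter M D E.
Proof.
rewrite /inter mulr_sumr; apply: eq_bigr => i _.
by rewrite mulr_sumr; apply: eq_bigr => j _; rewrite ffunE; ring.
Qed.

Lemma interZr k D E : inter M D (scale_cyc k E) = k * inter M D E.
Proof.
rewrite /inter mulr_sumr; apply: eq_bigr => i _.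
by rewrite mulr_sumr; apply: eq_bigr => j _; rewrite ffunE; ring.
Qed.

Lemma interNl D E : inter M (- D) E = - inter M D E.
Proof.
have -> : - D = scale_cyc (-1) D by apply/ffunP => i; rewrite !ffunE mulN1r.
by rewrite interZl mulN1r.
Qed.

Lemma interNr D E : inter M D (- E) = - inter M D E.
Proof.
have -> : - E = scale_cyc (-1) E by apply/ffunP => i; rewrite !ffunE mulN1r.
by rewrite interZr mulN1r.
Qed.

Lemma inter0l E : inter M 0 E = 0.
Proof. by rewrite -(subrr 0) interDl interNl subrr. Qed.

Definition interE := (interDl, interDr, interNl, interNr, interZl, interZr).

Lemma inter_sym D E : M^T = M -> inter M D E = inter M E D.
Proof.
move=> Msym; rewrite /inter exchange_big; apply: eq_bigr => i _; apply: eq_bigr => j _.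
have -> : M j i = M^T i j by rewrite mxE.
by rewrite Msym; ring.
Qed.

Lemma inter_ecycr D j : inter M D (ecyc j) = \sum_i D i * M i j.
Proof.
apply: eq_bigr => i _; rewrite (bigD1 j) //= big1 ?addr0 => [|l /negbTE jl].
  by rewrite ffunE eqxx mulr1.
by rewrite ffunE jl mulr0.
Qed.

Lemma inter_ecyc i j : inter M (ecyc i) (ecyc j) = M i j.
Proof.
rewrite inter_ecycr (bigD1 i) //= big1 ?addr0 => [|l /negbTE li].
  by rewrite ffunE eqxx mul1r.
by rewrite ffunE li mul0r.
Qed.

Lemma inter_sum_ecycr D E : inter M D E = \sum_j E j * inter M D (ecyc j).
Proof.
under [RHS]eq_bigr => j _ do rewrite inter_ecycr mulr_sumr.
rewrite /inter exchange_big; apply: eq_bigr => i _; apply: eq_bigr => j _; ring.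
Qed.

Lemma KdotD D E : Kdot M g (D + E) = Kdot M g D + Kdot M g E.
Proof. by rewrite /Kdot -big_split; apply: eq_bigr => i _; rewrite ffunE mulrDl. Qed.

Lemma KdotZ k D : Kdot M g (scale_cyc k D) = k * Kdot M g D.
Proof. by rewrite /Kdot mulr_sumr; apply: eq_bigr => i _; rewrite ffunE mulrA. Qed.

Lemma KdotN D : Kdot M g (- D) = - Kdot M g D.
Proof.
have -> : - D = scale_cyc (-1) D by apply/ffunP => i; rewrite !ffunE mulN1r.
by rewrite KdotZ mulN1r.
Qed.

Lemma Kdot_ecyc j : Kdot M g (ecyc j) = KE M g j.
Proof.
rewrite /Kdot (bigD1 j) //= big1 ?addr0 => [|l /negbTE jl].
  by rewrite ffunE eqxx mul1r.
by rewrite ffunE jl mul0r.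
Qed.

Lemma Kdot_concentrated (D : cyc n) a : (forall j, j != a -> KE M g j = 0) ->
  Kdot M g D = D a * KE M g a.
Proof.
move=> KE0; rewrite /Kdot (bigD1 a) //= big1 ?addr0 // => j /KE0 ->.
exact: mulr0.
Qed.

Lemma inter_Kdot_even D : M^T = M -> (2 %| inter M D D + Kdot M g D)%Z.
Proof.
move=> Msym.
have Dsym i j : D i * M i j * D j = D j * M j i * D i.
  have -> : M j i = M^T i j by rewrite mxE.
  by rewrite Msym; ring.
have -> : inter M D D + Kdot M g D = (inter M D D - \sum_i D i * M i i * D i)
    + \sum_i (M i i * (D i * (D i - 1)) + D i * ((g i)%:Z - 1) * 2).
  rewrite /Kdot -addrA; congr (_ + _); rewrite -sumrN -big_split /=.
  by apply: eq_bigr => i _; rewrite /KE; ring.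
rewrite rpredD ?sum_sym_diag_even //.
by apply: rpred_sum => i _; rewrite rpredD ?(dvdz_mull _ (even_mul_pred _)) ?dvdz_mull.
Qed.

Lemma ler_pa D E : (pa M g D <= pa M g E) =
  (inter M D D + Kdot M g D <= inter M E E + Kdot M g E).
Proof. by rewrite /pa lerD2l ler_pM2r ?invr_gt0 // ler_int. Qed.

Lemma pa_sub_ecyc D j : M^T = M ->
  pa M g (D - ecyc j) = pa M g D + (M j j - inter M D (ecyc j) + 1 - (g j)%:Z)%:~R.
Proof.
move=> Msym.
have e : inter M (D - ecyc j) (D - ecyc j) + Kdot M g (D - ecyc j) =
    inter M D D + Kdot M g D + (M j j - inter M D (ecyc j) + 1 - (g j)%:Z) * 2.
  rewrite !interE KdotD KdotN Kdot_ecyc inter_ecyc (inter_sym (ecyc j) D Msym) /KE; ring.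
by rewrite /pa e rmorphD rmorphM /=; field.
Qed.

Lemma inter_ecycr_ge (D : cyc n) i j : (forall i j, i != j -> 0 <= M i j) ->
  (forall i, 0 <= D i) -> i != j -> D j * M j j + D i * M i j <= inter M D (ecyc j).
Proof.
move=> Moff Dge0 ij; rewrite inter_ecycr (bigD1 j) //= (bigD1 i) /= ?ij //.
rewrite addrA lerDl; apply: sumr_ge0 => l /andP [lj _].
by rewrite mulr_ge0 ?Moff.
Qed.

End IntersectionForm.

Section FundamentalCycle.
Variables (n : nat) (M : 'M[int]_n) (Z : cyc n).
Hypothesis Zfund : fundamental_cycle M Z.

Lemma fundamental_cycle_gt0 i : 0 < Z i.
Proof. by case: Zfund => [[]]. Qed.

Lemma fundamental_cycle_nef i : inter M Z (ecyc i) <= 0.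
Proof. by case: Zfund => [[]]. Qed.

Lemma fundamental_cycle_least (D : cyc n) : (forall i, 0 < D i) ->
  (forall i, inter M D (ecyc i) <= 0) -> cyc_le Z D.
Proof. by case: Zfund => _ Zleast Dpos Dnef; apply: Zleast. Qed.

Lemma fundamental_cycle_primitive (k a : int) (D : cyc n) : (0 < n)%N -> 0 < k ->
  (forall i, k * D i = a * Z i) -> (k %| a)%Z.
Proof.
move=> n0 k0 kDaZ; apply/dvdz_mod0P/eqP; apply: contraT => r0.
have := ltz_pmod a k0; have := modz_ge0 a (lt0r_neq0 k0).
set r := (a %% k)%Z; set q := (a %/ k)%Z => rge0 rltk.
have rgt0 : 0 < r by rewrite lt_def r0.
pose Y := D - scale_cyc q Z.
have kY i : k * Y i = r * Z i.
  by rewrite !ffunE mulrBr kDaZ {1}(divz_eq a k) -/q -/r; ring.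
have ZY : cyc_le Z Y.
  apply: fundamental_cycle_least => i.
    by rewrite -(pmulr_rgt0 _ k0) kY mulr_gt0 ?fundamental_cycle_gt0.
  rewrite -(pmulr_rle0 _ k0) -!interZl.
  have -> : scale_cyc k Y = scale_cyc r Z by apply/ffunP => l; rewrite [LHS]ffunE [RHS]ffunE kY.
  by rewrite interZl mulr_ge0_le0 ?fundamental_cycle_nef // ltW.
have i0 : 'I_n := Ordinal n0.
have := ZY i0; rewrite -(ler_pM2l k0) kY ler_pM2r ?fundamental_cycle_gt0 //.
by rewrite leNgt rltk.
Qed.

Lemma fundamental_cycle_inter_gt b j : (forall i j, i != j -> 0 <= M i j) ->
  b != j -> 0 < M b j -> M j j < inter M Z (ecyc j).
Proof.
(* Otherwise Z - E_j would satisfy the defining conditions of Z. *)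
move=> Moff bj Mbj; rewrite ltNge; apply/negP => ZEj_le.
have Zj_ne1 : Z j != 1.
  apply/eqP => Zj1.
  have := inter_ecycr_ge Moff (fun i => ltW (fundamental_cycle_gt0 i)) bj.
  rewrite Zj1 mul1r; have := fundamental_cycle_gt0 b; nia.
have ZY : cyc_le Z (Z - ecyc j).
  apply: fundamental_cycle_least => i.
    rewrite !ffunE; have := fundamental_cycle_gt0 i.
    by case: eqP => [->|_] /=; lia.
  rewrite interDl interNl inter_ecyc.
  have [<-|ji] := eqVneq j i; first by rewrite subr_le0.
  by rewrite subr_le0 (le_trans (fundamental_cycle_nef i)) ?Moff.
by have := ZY j; rewrite !ffunE eqxx /=; lia.
Qed.

End FundamentalCycle.

Lemma connected_neighbour n (M : 'M[int]_n) i j :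
  (forall i j, connect [rel a b | (a != b) && (0 < M a b)] i j) ->
  i != j -> exists2 b, b != i & 0 < M i b.
Proof.
move=> Mconn ij; case/connectP: (Mconn i j) => [[|b s]] /=.
  by move=> _ ji; rewrite ji eqxx in ij.
by case/andP=> /andP [ib Mib] _ _; exists b; rewrite 1?eq_sym.
Qed.

Lemma essentially_irreducible_minus2_curves n (M : 'M[int]_n) g (Z : cyc n) :
  (forall i, 0 < Z i) -> essentially_irreducible M g Z ->
  exists a, forall j, j != a -> minus2_curve M g j.
Proof.
move=> Zpos [a [_ [ZkA | Zrest]]]; exists a => j ja.
  by have := Zpos j; rewrite ZkA !ffunE (negbTE ja) mulr0 ltxx.
by apply: Zrest; rewrite ffunE (negbTE ja) mulr0 subr0 gt_eqF.
Qed.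

Lemma Zmin_inter_minus2_curve n (M : 'M[int]_n) g (Z : cyc n) b j :
  M^T = M -> (forall i j, i != j -> 0 <= M i j) ->
  fundamental_cycle M Z -> Z_is_Zmin M g Z -> minus2_curve M g j ->
  b != j -> 0 < M j b -> inter M Z (ecyc j) = 0.
Proof.
move=> Msym Moff Zfund Zmin [gj Mjj] bj Mjb.
have Mbj : 0 < M b j by move: Mjb; rewrite -{1}Msym mxE.
have Zpos := fundamental_cycle_gt0 Zfund.
have := fundamental_cycle_inter_gt Zfund Moff bj Mbj.
have := fundamental_cycle_nef Zfund j; rewrite Mjj.
have ZEj_neN1 : inter M Z (ecyc j) != -1.  (* else p_a(Z - E_j) = p_a(Z) *)
  apply/eqP => ZEj.
  have /ffunP/(_ j) : Z - ecyc j = Z.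
    apply: Zmin; last by rewrite pa_sub_ecyc // ZEj Mjj gj addr0.
    - split=> [i|/ffunP/(_ b)]; rewrite !ffunE.
        by have := Zpos i; case: eqP => _ /=; lia.
      by rewrite (negbTE bj) /=; have := Zpos b; lia.
    - by move=> i; rewrite !ffunE; case: eqP => _ /=; lia.
  by rewrite !ffunE eqxx /=; lia.
lia.
Qed.

Section DegreeTwoOrThree.
Variables (n : nat) (M : 'M[int]_n) (Z : cyc n) (a : 'I_n) (d : int).
Hypotheses (Msym : M^T = M) (Mneg : forall D : cyc n, D <> 0 -> inter M D D < 0).
Hypotheses (Zfund : fundamental_cycle M Z) (d23 : d = 2 \/ d = 3).
Hypotheses (ZZ : inter M Z Z = - d) (ZE0 : forall j, j != a -> inter M Z (ecyc j) = 0).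

Lemma inter_fundamentalr (D : cyc n) : inter M D Z = D a * inter M Z (ecyc a).
Proof.
rewrite inter_sym // inter_sum_ecycr (bigD1 a) //= big1 ?addr0 // => j /ZE0 ->.
exact: mulr0.
Qed.

Lemma fundamental_coeff_mul_inter : Z a * inter M Z (ecyc a) = - d.
Proof. by rewrite -ZZ inter_fundamentalr. Qed.

Lemma fundamental_coeff_eq_degree : Z a != 1 -> Z a = d.
Proof.
move=> Za_ne1; have := fundamental_cycle_gt0 Zfund a; have := fundamental_cycle_nef Zfund a.
have := fundamental_coeff_mul_inter; set z := inter M Z (ecyc a) => kz z_le0 k_gt0.
have z_le : z <= -1 by case: d23 kz => -> kz; nia.
by case: d23 kz => -> kz; nia.
Qed.

Lemma inter_self_sub_fundamental (D : cyc n) :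
  let C := scale_cyc (Z a) D - scale_cyc (D a) Z in
  inter M C C = Z a * Z a * inter M D D + D a * D a * d.
Proof.
rewrite /= !interE (inter_sym Z D Msym) inter_fundamentalr ZZ.
transitivity (Z a * Z a * inter M D D - 2 * D a * D a * (Z a * inter M Z (ecyc a))
  - D a * D a * d); first by ring.
by rewrite fundamental_coeff_mul_inter; ring.
Qed.

Lemma inter_le_multiple_fundamental (D : cyc n) (kap : int) : exists m,
  inter M D D + D a * kap <=
  inter M (scale_cyc m Z) (scale_cyc m Z) + scale_cyc m Z a * kap.
Proof.
move: (inter_self_sub_fundamental D).
set C := _ - _; set k := Z a; set A := D a; set X := inter M D D => CC.
have k_gt0 : 0 < k := fundamental_cycle_gt0 Zfund a.
suff [m Xm] : exists m, X + A * kap <= - (d * m * m) + m * (k * kap).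
  by exists m; rewrite !interE ZZ ffunE -/k; nia.
have [/dvdzP [q Aq] | kndA] := boolP (k %| A)%Z.
  exists q; have : k * k * (X + q * q * d) <= 0.
    have -> : k * k * (X + q * q * d) = inter M C C by rewrite CC Aq; ring.
    have [->|C_ne0] := eqVneq C 0; first by rewrite inter0l.
    exact/ltW/Mneg/eqP.
  by rewrite pmulr_rle0 ?mulr_gt0 // Aq; nia.
have C_ne0 : C != 0.
  apply: contra kndA => /eqP C0.
  apply: (fundamental_cycle_primitive Zfund (D := D)) => // [|i].
    exact: leq_ltn_trans (leq0n _) (ltn_ord a).
  by apply/eqP; rewrite -subr_eq0; have /ffunP/(_ i) := C0; rewrite !ffunE => ->.
have k_ne1 : k != 1 by apply: contra kndA => /eqP ->; exact: dvd1z.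
have k_eq : k = d := fundamental_coeff_eq_degree k_ne1.
have CC_le : k * k * X + A * A * d <= -1.
  by rewrite -CC -ltzD1 /= addrC subrr; apply/Mneg/eqP.
by rewrite k_eq in kndA CC_le *; apply: nondivisible_square_bound.
Qed.

Variable (g : 'I_n -> nat).
Hypothesis KE0 : forall j, j != a -> KE M g j = 0.

Lemma pa_le_multiple_fundamental (D : cyc n) :
  exists m, pa M g D <= pa M g (scale_cyc m Z).
Proof.
have [m Dm] := inter_le_multiple_fundamental D (KE M g a).
by exists m; rewrite ler_pa !(Kdot_concentrated _ KE0).
Qed.

Variable t : int.
Hypothesis Zt : inter M Z Z + Kdot M g Z = t * 2.

Lemma pa_scale_fundamental m :
  pa M g (scale_cyc m Z) = 1 + (m * (2 * t + d) - d * m * m)%:~R / 2.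
Proof.
have KZ : Kdot M g Z = 2 * t + d by apply: (addrI (inter M Z Z)); rewrite Zt ZZ; ring.
by rewrite /pa interZl interZr KdotZ ZZ KZ; congr (1 + (_)%:~R / 2); ring.
Qed.

Lemma is_sing_pa_multiple_fundamental (f : int) : 0 <= t -> f * d <= t < (f + 1) * d ->
  is_sing_pa M g (pa M g (scale_cyc (f + 1) Z)).
Proof.
move=> t_ge0 tf; have d_gt0 : 0 < d by case: d23 => ->.
have f_ge0 : 0 <= f by case/andP: tf => _; nia.
split.
  exists (scale_cyc (f + 1) Z); split => //; split=> [i|/ffunP/(_ a)].
    by rewrite !ffunE; have := fundamental_cycle_gt0 Zfund i; nia.
  by rewrite !ffunE; have := fundamental_cycle_gt0 Zfund a; nia.
move=> D _; have [m /le_trans] := pa_le_multiple_fundamental D; apply.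
rewrite !pa_scale_fundamental lerD2l ler_pM2r // ler_int.
exact: quadratic_le_at_floor.
Qed.

End DegreeTwoOrThree.

Theorem lemma3p12 (n : nat) (M : 'M[int]_n) (g : 'I_n -> nat) (Z : cyc n) (d : nat) :
  resolution_data M g ->
  fundamental_cycle M Z ->
  (d = 2%N \/ d = 3%N) ->
  inter M Z Z = - (d%:Z) ->
  0 < pa M g Z ->
  essentially_irreducible M g Z ->
  Z_is_Zmin M g Z ->
  let p := pa M g Z in
  let f : int := Num.floor ((p - 1) / d%:R) in
  is_sing_pa M g (pa M g (scale_cyc (f + 1) Z)) /\
  pa M g (scale_cyc (f + 1) Z)
    = d%:R / 2 * ((2 * p - 2) / d%:R - f%:~R) * (f%:~R + 1) + 1.
Proof.
move=> [_ [Msym Moff Mneg Mconn _]] Zfund d23 ZZ pZ_gt0 Zess Zmin p f.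
have [a minus2] := essentially_irreducible_minus2_curves (fundamental_cycle_gt0 Zfund) Zess.
have ZE0 j : j != a -> inter M Z (ecyc j) = 0.
  move=> ja; have [b bj Mjb] := connected_neighbour Mconn ja.
  exact: Zmin_inter_minus2_curve Msym Moff Zfund Zmin (minus2 j ja) bj Mjb.
have KE0 j : j != a -> KE M g j = 0 by move/minus2 => [gj Mjj]; rewrite /KE gj Mjj.
have [t Zt] := dvdzP (inter_Kdot_even g Z Msym).
have pE : p = 1 + t%:~R by rewrite /p /pa Zt rmorphM /= mulfK.
have t_ge0 : 0 <= t.
  by move: pZ_gt0; rewrite -/p pE -(rmorph1 (intr : int -> rat)) -rmorphD ltr0z; lia.
have d23' : d%:Z = 2 \/ d%:Z = 3 by case: d23 => ->; [left | right].
have d_gt0 : 0 < d%:Z by case: d23' => ->.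
have fE : f = Num.floor (t%:~R / (d%:Z)%:~R : rat).
  by rewrite /f pE addrC addKr.
have tf := floor_div_bounds d_gt0 fE.
split.
  exact: (is_sing_pa_multiple_fundamental Msym Mneg Zfund d23' ZZ ZE0 KE0 Zt t_ge0 tf).
rewrite (pa_scale_fundamental ZZ Zt) pE !(rmorphB, rmorphD, rmorphM) /=.
have -> : (d%:Z)%:~R = d%:R :> rat by [].
by field; rewrite pnatr_eq0; case: d23 => ->.
Qed.
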